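(* Assume $\gamma_0$ is unimodal (and symmetric about $0$) with $\sup_u|\frac{d}{du}\log\gamma_0(u)|\le\Lambda$ a.e. and $\sup_u|\frac{d^2}{du^2}\log\gamma_0(u)|\le\Lambda'$ a.e. for some $\Lambda,\Lambda'>0$. Then there is a constant $C>0$ depending only on $\gamma_0$ such that for all $x\in\mathbb{R}$, $w\in(0,1]$, $c\in\mathbb{R}$, $$\left|\frac{d}{dx}\zeta(x;\theta)\right|\le C\bigl(1+|c|+\log(1/w)\bigr).$$ The same conclusion holds when $\gamma_0$ is the double exponential density $\gamma_0(u)=\frac{\Lambda}{2}e^{-\Lambda|u|}$.
   Context: Let $\phi$ be the standard normal density and $\gamma_0$ a probability density on $\mathbb{R}$. For $\theta=(w,c)$, $w\in(0,1]$, $c\in\mathbb{R}$, let $g(x;c)=\int\phi(x-\mu)\gamma_0(\mu-c)\,d\mu$, $m(x;\theta)=(1-w)\phi(x)+wg(x;c)$, and $\zeta(x;\theta)=x+\frac{d}{dx}\log m(x;\theta)$ (the posterior mean of $\mu$ given $X=x$ under $X\mid\mu\sim N(\mu,1)$ and prior $(1-w)\delta_0+w\gamma_0(\cdot-c)$). *)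

From Stdlib Require Import Reals Lra ClassicalEpsilon.
Open Scope R_scope.

Definition phi (x : R) : R := exp (- (x ^ 2) / 2) / sqrt (2 * PI).

Definition improper_integral_of (f : R -> R) (l : R) : Prop :=
  (forall a b, a <= b -> inhabited (Riemann_integrable f a b)) /\
  (forall eps, 0 < eps -> exists M, forall a b (pr : Riemann_integrable f a b),
      a < - M -> M < b -> Rabs (RiemannInt pr - l) < eps).

(* The value of the integral (chosen by classical choice; determined
   uniquely whenever the integral exists). *)
Definition Integral (f : R -> R) : R :=
  epsilon (inhabits 0) (fun l => improper_integral_of f l).

Definition deriv (f : R -> R) (x : R) : R :=
  epsilon (inhabits 0) (fun d => derivable_pt_lim f x d).

Definition gconv (gamma0 : R -> R) (c x : R) : R :=
  Integral (fun mu => phi (x - mu) * gamma0 (mu - c)).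

Definition marg (gamma0 : R -> R) (w c x : R) : R :=
  (1 - w) * phi x + w * gconv gamma0 c x.

Definition zeta (gamma0 : R -> R) (w c x : R) : R :=
  x + deriv (fun y => ln (marg gamma0 w c y)) x.

Definition is_density (gamma0 : R -> R) : Prop :=
  (forall u, 0 <= gamma0 u) /\ improper_integral_of gamma0 1.

Definition symmetric_unimodal (gamma0 : R -> R) : Prop :=
  (forall u, gamma0 (- u) = gamma0 u) /\
  (forall u v, 0 <= u -> u <= v -> gamma0 v <= gamma0 u).

(* Regularity hypothesis of the first case: log gamma0 is differentiable
   with derivative l' satisfying |l'| <= Lam and |l''| <= Lam' a.e.,
   rendered as: l' is Lam'-Lipschitz. *)
Definition log_regular (gamma0 : R -> R) (Lam Lam' : R) : Prop :=
  (forall u, 0 < gamma0 u) /\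
  exists l' : R -> R,
    (forall u, derivable_pt_lim (fun v => ln (gamma0 v)) u (l' u)) /\
    (forall u, Rabs (l' u) <= Lam) /\
    (forall u v, Rabs (l' u - l' v) <= Lam' * Rabs (u - v)).

Definition laplace (Lam : R) (u : R) : R := Lam / 2 * exp (- Lam * Rabs u).

From Coquelicot Require Import Coquelicot.
From Stdlib Require Import Reals Lra Lia ClassicalEpsilon FunctionalExtensionality.
Open Scope R_scope.

(* The derivative of zeta is 1 + (log m)'', the posterior variance of mu
   given X = x.  The posterior is a two-component mixture: the atom at 0, with
   weight proportional to A = (1 - w) phi(x), and the smoothed prior
   component, with density proportional to phi(mu - x) gamma0(mu - c).  Since
   log gamma0 is Lam-Lipschitz, gamma0(mu - c) stays within a factor
   exp(Lam |mu - x|) of gamma0(x - c), which the Gaussian factor absorbs; so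
   the second moment of mu - x under the smoothed component is bounded by a
   constant times its mass.  The remaining, between-component, part of the
   variance is at most 2 x^2 times the weight of the atom, and
   A x^2 / m(x) is bounded by a multiple of 1 + |c| + log(1/w) because
   m(x) >= w gamma0(0) exp(-Lam (|x| + |c|)) up to a constant while
   A <= exp(-x^2/2). *)

Lemma exp_le_exp_compat a b : a <= b -> exp a <= exp b.
Proof. intros [Hlt | ->]; [left; apply exp_increasing | right]; auto. Qed.

Lemma exp_opp_mul_exp a : exp (- a) * exp a = 1.
Proof. rewrite <- exp_plus, Rplus_opp_l; apply exp_0. Qed.

Lemma exp_opp_ln_inv w : 0 < w -> exp (- ln (1 / w)) = w.
Proof. intros Hw; unfold Rdiv; rewrite Rmult_1_l, ln_Rinv, Ropp_involutive, exp_ln; auto. Qed.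

Lemma ln_inv_ge_0 w : 0 < w -> w <= 1 -> 0 <= ln (1 / w).
Proof.
  intros Hw0 Hw1; rewrite <- ln_1; apply ln_le; [lra |].
  apply Rle_div_r; lra.
Qed.

Lemma continuity_shift f a : continuity f -> continuity (fun mu => f (mu - a)).
Proof. intros Hf x; apply (continuity_pt_comp (fun mu => mu - a) f); [reg | apply Hf]. Qed.

Lemma continuity_mult_fun f g : continuity f -> continuity g -> continuity (fun x => f x * g x).
Proof. intros Hf Hg x; apply continuity_pt_mult; auto. Qed.

Lemma continuity_plus_fun f g : continuity f -> continuity g -> continuity (fun x => f x + g x).
Proof. intros Hf Hg x; apply continuity_pt_plus; auto. Qed.

Lemma continuity_scal_fun k f : continuity f -> continuity (fun x => k * f x).
Proof. intros Hf x; apply continuity_pt_mult; [apply continuity_pt_const; intros ? ?|]; auto. Qed.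

Lemma deriv_derivable_pt_lim f x d : derivable_pt_lim f x d -> deriv f x = d.
Proof.
  intros Hd; apply (uniqueness_limite f x); [| exact Hd].
  unfold deriv; apply epsilon_spec; exists d; exact Hd.
Qed.

Lemma MVT_abs (f f' : R -> R) a b : (forall s, derivable_pt_lim f s (f' s)) ->
  exists xi, Rabs (xi - a) <= Rabs (b - a) /\ f b - f a = f' xi * (b - a).
Proof.
  intros Hf; destruct (Rtotal_order a b) as [Hab | [<- | Hba]].
  - destruct (MVT_cor2 f f' a b Hab) as [xi [E Hxi]]; [intros; auto |].
    exists xi; split; [rewrite !Rabs_right by lra; lra | exact E].
  - exists a; split; [right; reflexivity | ring].
  - destruct (MVT_cor2 f f' b a Hba) as [xi [E Hxi]]; [intros; auto |].
    exists xi; split; [rewrite !Rabs_left by lra; lra | lra].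
Qed.

(* Lagrange form of the second-order Taylor remainder, obtained by applying
   the mean value theorem to [s |-> p (t - s) - p t + s dp t] and then to [dp]. *)
Lemma taylor_lagrange_2 (p dp ddp : R -> R) t h :
  (forall s, derivable_pt_lim p s (dp s)) -> (forall s, derivable_pt_lim dp s (ddp s)) ->
  exists xi, Rabs (xi - t) <= Rabs h /\
    Rabs (p (t - h) - p t + h * dp t) <= Rabs (ddp xi) * h ^ 2.
Proof.
  intros Hp Hdp.
  set (r := fun s => p (t - s) - p t + s * dp t).
  assert (Hr : forall s, derivable_pt_lim r s (dp t - dp (t - s))).
  { intros s; unfold r.
    replace (dp t - dp (t - s)) with (dp (t - s) * (0 - 1) - 0 + (1 * dp t + s * 0)) by ring.
    apply derivable_pt_lim_plus; [apply derivable_pt_lim_minus |].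
    - apply (derivable_pt_lim_comp (fun s => t - s) p); [| apply Hp].
      apply derivable_pt_lim_minus; [apply derivable_pt_lim_const | apply derivable_pt_lim_id].
    - apply derivable_pt_lim_const.
    - apply (derivable_pt_lim_mult (fun s => s) (fun _ => dp t));
        [apply derivable_pt_lim_id | apply derivable_pt_lim_const]. }
  destruct (MVT_abs r _ 0 h Hr) as [s [Hs Er]].
  destruct (MVT_abs dp ddp t (t - s) Hdp) as [xi [Hxi Edp]].
  rewrite !Rminus_0_r in Hs; replace (h - 0) with h in Hs by ring; replace (t - s - t) with (- s) in Hxi, Edp by ring.
  rewrite Rabs_Ropp in Hxi.
  exists xi; split; [lra |].
  assert (Hr0 : r 0 = 0) by (unfold r; rewrite Rminus_0_r; ring).
  change (p (t - h) - p t + h * dp t) with (r h).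
  assert (Hds : dp t - dp (t - s) = ddp xi * s) by lra.
  rewrite Hds, Hr0 in Er; replace (r h) with (ddp xi * s * h) by lra.
  rewrite !Rabs_mult, <- (pow2_abs h); replace (Rabs h ^ 2) with (Rabs h * Rabs h) by ring.
  rewrite Rmult_assoc; apply Rmult_le_compat_l; [apply Rabs_pos |].
  apply Rmult_le_compat_r; [apply Rabs_pos | lra].
Qed.

Lemma derivable_pt_lim_quadratic_remainder (I : R -> R) x I1 C : 0 <= C ->
  (forall h, Rabs h <= 1 -> Rabs (I (x + h) - I x - h * I1) <= C * h ^ 2) ->
  derivable_pt_lim I x I1.
Proof.
  intros HC Hrem eps Heps.
  assert (HC1 : 0 < C + 1) by lra.
  assert (Hdelta : 0 < Rmin 1 (eps / (C + 1)))
    by (apply Rmin_pos; [lra | apply Rdiv_lt_0_compat; lra]).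
  exists (mkposreal _ Hdelta); intros h Hh0 Hh; simpl in Hh.
  pose proof (Rmin_l 1 (eps / (C + 1))); pose proof (Rmin_r 1 (eps / (C + 1))).
  assert (Hsmall : Rabs h * (C + 1) < eps) by (apply Rlt_div_r; lra).
  specialize (Hrem h ltac:(lra)).
  assert (Habs : 0 < Rabs h) by (apply Rabs_pos_lt; auto).
  replace ((I (x + h) - I x) / h - I1) with ((I (x + h) - I x - h * I1) / h) by (field; auto).
  rewrite Rabs_div by auto; apply Rlt_div_l; auto.
  rewrite <- pow2_abs in Hrem; nra.
Qed.

(** * Improper integrals of continuous functions *)

Lemma ex_RInt_continuity f a b : continuity f -> ex_RInt f a b.
Proof.
  intros Hf; apply (@ex_RInt_continuous R_CompleteNormedModule).
  intros z _; apply continuity_pt_filterlim, Hf.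
Qed.

Section RIntContinuous.
Variable f : R -> R.
Hypothesis f_cont : continuity f.

Lemma RInt_plus_cont g a b : continuity g ->
  RInt (fun x => f x + g x) a b = RInt f a b + RInt g a b.
Proof.
  intros Hg.
  exact (RInt_plus f g a b (ex_RInt_continuity f a b f_cont) (ex_RInt_continuity g a b Hg)).
Qed.

Lemma RInt_scal_cont k a b : RInt (fun x => k * f x) a b = k * RInt f a b.
Proof. exact (RInt_scal f a b k (ex_RInt_continuity f a b f_cont)). Qed.

Lemma RInt_Chasles_cont a b c : RInt f a b + RInt f b c = RInt f a c.
Proof.
  exact (RInt_Chasles f a b c (ex_RInt_continuity f a b f_cont) (ex_RInt_continuity f b c f_cont)).
Qed.

Lemma RInt_ge_0_cont a b : a <= b -> (forall x, 0 <= f x) -> 0 <= RInt f a b.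
Proof. intros; apply RInt_ge_0; auto using ex_RInt_continuity. Qed.

Lemma RInt_le_cont g a b : a <= b -> continuity g -> (forall x, f x <= g x) ->
  RInt f a b <= RInt g a b.
Proof. intros; apply RInt_le; auto using ex_RInt_continuity. Qed.

Lemma RInt_le_RInt_nonneg a0 b0 a b : (forall x, 0 <= f x) ->
  a <= a0 -> a0 <= b0 -> b0 <= b -> RInt f a0 b0 <= RInt f a b.
Proof.
  intros Hpos Ha Hab Hb.
  rewrite <- (RInt_Chasles_cont a a0 b), <- (RInt_Chasles_cont a0 b0 b).
  pose proof (RInt_ge_0_cont a a0 Ha Hpos); pose proof (RInt_ge_0_cont b0 b Hb Hpos); lra.
Qed.

End RIntContinuous.

(* Coquelicot counterpart of [improper_integral_of], restricted to continuous
   integrands so that every compact piece is integrable. *)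
Definition is_RInt_R (f : R -> R) (l : R) : Prop :=
  continuity f /\
  forall eps, 0 < eps -> exists M, forall a b, a < - M -> M < b ->
    Rabs (RInt f a b - l) < eps.

Lemma is_RInt_R_improper_integral_of f l : is_RInt_R f l -> improper_integral_of f l.
Proof.
  intros [Hf Hl]; split.
  - intros a b _; constructor; apply ex_RInt_Reals_0, ex_RInt_continuity, Hf.
  - intros eps Heps; destruct (Hl eps Heps) as [M HM]; exists M.
    intros a b pr Ha Hb; rewrite <- RInt_Reals; auto.
Qed.

Lemma improper_integral_of_unique f l1 l2 :
  improper_integral_of f l1 -> improper_integral_of f l2 -> l1 = l2.
Proof.
  intros [Hint H1] [_ H2].
  destruct (Req_dec l1 l2) as [| Hne]; auto; exfalso.
  set (eps := Rabs (l1 - l2) / 2).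
  assert (Heps : 0 < eps) by (unfold eps; pose proof (Rabs_pos_lt (l1 - l2)); lra).
  destruct (H1 eps Heps) as [M1 HM1], (H2 eps Heps) as [M2 HM2].
  set (M := Rabs M1 + Rabs M2 + 1).
  pose proof (Rle_abs M1); pose proof (Rle_abs M2); pose proof (Rabs_pos M1); pose proof (Rabs_pos M2).
  destruct (Hint (- M) M) as [pr]; [unfold M; lra |].
  specialize (HM1 (- M) M pr ltac:(unfold M; lra) ltac:(unfold M; lra)).
  specialize (HM2 (- M) M pr ltac:(unfold M; lra) ltac:(unfold M; lra)).
  assert (Rabs (l1 - l2) <= Rabs (RiemannInt pr - l2) + Rabs (RiemannInt pr - l1)).
  { replace (l1 - l2) with ((RiemannInt pr - l2) - (RiemannInt pr - l1)) by ring.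
    unfold Rminus at 1; rewrite <- (Rabs_Ropp (RiemannInt pr - l1)); apply Rabs_triang. }
  unfold eps in *; lra.
Qed.

Lemma Integral_is_RInt_R f l : is_RInt_R f l -> Integral f = l.
Proof.
  intros Hl; apply is_RInt_R_improper_integral_of in Hl.
  apply (improper_integral_of_unique f); [| exact Hl].
  unfold Integral; apply epsilon_spec; exists l; exact Hl.
Qed.

Lemma is_RInt_R_plus f g l1 l2 :
  is_RInt_R f l1 -> is_RInt_R g l2 -> is_RInt_R (fun x => f x + g x) (l1 + l2).
Proof.
  intros [Hf H1] [Hg H2]; split; [apply continuity_plus_fun; auto |].
  intros eps Heps.
  destruct (H1 (eps / 2)) as [M1 HM1]; [lra |]. destruct (H2 (eps / 2)) as [M2 HM2]; [lra |].
  exists (Rabs M1 + Rabs M2); intros a b Ha Hb.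
  pose proof (Rle_abs M1); pose proof (Rle_abs M2); pose proof (Rabs_pos M1); pose proof (Rabs_pos M2).
  rewrite RInt_plus_cont by auto.
  specialize (HM1 a b ltac:(lra) ltac:(lra)); specialize (HM2 a b ltac:(lra) ltac:(lra)).
  replace (RInt f a b + RInt g a b - (l1 + l2)) with ((RInt f a b - l1) + (RInt g a b - l2)) by ring.
  eapply Rle_lt_trans; [apply Rabs_triang | lra].
Qed.

Lemma is_RInt_R_scal k f l : is_RInt_R f l -> is_RInt_R (fun x => k * f x) (k * l).
Proof.
  intros [Hf H]; split; [apply continuity_scal_fun; auto |].
  intros eps Heps; pose proof (Rabs_pos k).
  destruct (H (eps / (Rabs k + 1))) as [M HM]; [apply Rdiv_lt_0_compat; lra |].
  exists M; intros a b Ha Hb; specialize (HM a b Ha Hb).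
  rewrite RInt_scal_cont by auto.
  replace (k * RInt f a b - k * l) with (k * (RInt f a b - l)) by ring.
  rewrite Rabs_mult; pose proof (Rabs_pos (RInt f a b - l)).
  apply Rle_lt_trans with ((Rabs k + 1) * Rabs (RInt f a b - l)); [nra |].
  apply Rmult_lt_compat_l with (r := Rabs k + 1) in HM; [| lra].
  replace ((Rabs k + 1) * (eps / (Rabs k + 1))) with eps in HM by (field; lra); exact HM.
Qed.

Lemma is_RInt_R_le f l B : is_RInt_R f l ->
  (exists M0, forall a b, a < - M0 -> M0 < b -> RInt f a b <= B) -> l <= B.
Proof.
  intros [_ H] [M0 HM0]; apply Rnot_lt_le; intros HBl.
  destruct (H (l - B)) as [M HM]; [lra |].
  set (N := Rabs M + Rabs M0 + 1).
  pose proof (Rle_abs M); pose proof (Rle_abs M0); pose proof (Rabs_pos M); pose proof (Rabs_pos M0).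
  specialize (HM (- N) N ltac:(unfold N; lra) ltac:(unfold N; lra)).
  specialize (HM0 (- N) N ltac:(unfold N; lra) ltac:(unfold N; lra)).
  apply Rabs_def2 in HM; lra.
Qed.

Lemma is_RInt_R_ge f l B : is_RInt_R f l ->
  (exists M0, forall a b, a < - M0 -> M0 < b -> B <= RInt f a b) -> B <= l.
Proof.
  intros Hl [M0 HM0]; pose proof Hl as [Hf _].
  enough (-1 * l <= -1 * B) by lra.
  apply (is_RInt_R_le _ _ _ (is_RInt_R_scal (-1) f l Hl)); exists M0; intros a b Ha Hb.
  rewrite RInt_scal_cont by auto; specialize (HM0 a b Ha Hb); lra.
Qed.

Lemma is_RInt_R_RInt_le f l a0 b0 : is_RInt_R f l -> (forall x, 0 <= f x) -> a0 <= b0 ->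
  RInt f a0 b0 <= l.
Proof.
  intros Hl Hpos Hab; pose proof Hl as [Hf _].
  apply (is_RInt_R_ge f); auto; exists (Rabs a0 + Rabs b0); intros a b Ha Hb.
  apply RInt_le_RInt_nonneg; auto; split_Rabs; lra.
Qed.

Lemma is_RInt_R_nonneg_bounded f B : continuity f -> (forall x, 0 <= f x) ->
  (forall a b, a <= b -> RInt f a b <= B) -> exists l, is_RInt_R f l.
Proof.
  intros Hf Hpos HB.
  set (E := fun y => exists a b, a <= b /\ y = RInt f a b).
  destruct (completeness E) as [l [Hub Hlub]].
  - exists B; intros y [a [b [Hab ->]]]; auto.
  - exists (RInt f 0 0), 0, 0; split; auto; lra.
  - exists l; split; auto; intros eps Heps.
    assert (Hnear : exists a0 b0, a0 <= b0 /\ l - eps < RInt f a0 b0).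
    { apply NNPP; intros Hno; enough (l <= l - eps) by lra.
      apply Hlub; intros y [a [b [Hab ->]]]; apply Rnot_lt_le; intros Hlt.
      apply Hno; exists a, b; auto. }
    destruct Hnear as [a0 [b0 [Hab Hlt]]].
    exists (Rabs a0 + Rabs b0); intros a b Ha Hb.
    assert (RInt f a b <= l) by (apply Hub; exists a, b; split; auto; split_Rabs; lra).
    assert (RInt f a0 b0 <= RInt f a b) by (apply RInt_le_RInt_nonneg; auto; split_Rabs; lra).
    apply Rabs_def1; lra.
Qed.

Definition cauchy_kernel (x0 mu : R) : R := / (1 + (mu - x0) ^ 2).

Lemma continuity_cauchy_kernel x0 : continuity (cauchy_kernel x0).
Proof.
  intros x; apply continuity_pt_inv; [reg |].
  pose proof (pow2_ge_0 (x - x0)); lra.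
Qed.

Lemma RInt_cauchy_kernel x0 a b :
  RInt (cauchy_kernel x0) a b = atan (b - x0) - atan (a - x0).
Proof.
  apply is_RInt_unique, (is_RInt_derive (fun mu => atan (mu - x0))).
  - intros x _; apply is_derive_Reals.
    replace (cauchy_kernel x0 x) with (/ (1 + (x - x0) ^ 2) * (1 - 0)) by (unfold cauchy_kernel; ring).
    apply (derivable_pt_lim_comp (fun mu => mu - x0) atan); [| apply derivable_pt_lim_atan].
    apply derivable_pt_lim_minus; [apply derivable_pt_lim_id | apply derivable_pt_lim_const].
  - intros x _; apply continuity_pt_filterlim, continuity_cauchy_kernel.
Qed.

Lemma RInt_cauchy_kernel_le x0 K a b : 0 <= K -> a <= b ->
  RInt (fun mu => K * cauchy_kernel x0 mu) a b <= K * PI.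
Proof.
  intros HK Hab; rewrite RInt_scal_cont, RInt_cauchy_kernel by apply continuity_cauchy_kernel.
  apply Rmult_le_compat_l; auto.
  pose proof (atan_bound (b - x0)); pose proof (atan_bound (a - x0)); lra.
Qed.

Lemma is_RInt_R_dominated f K x0 : continuity f -> 0 <= K ->
  (forall mu, Rabs (f mu) <= K * cauchy_kernel x0 mu) -> exists l, is_RInt_R f l.
Proof.
  intros Hf HK Hdom.
  set (h := fun mu => K * cauchy_kernel x0 mu).
  assert (Hh : continuity h) by apply continuity_scal_fun, continuity_cauchy_kernel.
  assert (Hfh : forall mu, - h mu <= f mu <= h mu) by (intros mu; apply Rabs_le_between, Hdom).
  destruct (is_RInt_R_nonneg_bounded h (K * PI)) as [lh Hlh]; auto.
  { intros mu; specialize (Hfh mu); lra. }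
  { intros a b Hab; apply RInt_cauchy_kernel_le; auto. }
  destruct (is_RInt_R_nonneg_bounded (fun mu => f mu + h mu) (2 * (K * PI))) as [lg Hlg].
  { apply continuity_plus_fun; auto. }
  { intros mu; specialize (Hfh mu); lra. }
  { intros a b Hab; rewrite RInt_plus_cont by auto.
    assert (RInt f a b <= RInt h a b) by (apply RInt_le_cont; auto; intros mu; apply Hfh).
    pose proof (RInt_cauchy_kernel_le x0 K a b HK Hab) as Hh_le; fold h in Hh_le; lra. }
  exists (lg + -1 * lh).
  replace f with (fun mu => (f mu + h mu) + -1 * h mu) by (apply functional_extensionality; intros; ring).
  apply is_RInt_R_plus; [| apply is_RInt_R_scal]; auto.
Qed.

Lemma is_RInt_R_le_dominated f l K x0 : is_RInt_R f l -> 0 <= K ->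
  (forall mu, f mu <= K * cauchy_kernel x0 mu) -> l <= K * PI.
Proof.
  intros Hl HK Hdom; pose proof Hl as [Hf _].
  apply (is_RInt_R_le f); auto; exists 0; intros a b Ha Hb.
  eapply Rle_trans; [| apply (RInt_cauchy_kernel_le x0 K a b HK); lra].
  apply RInt_le_cont; auto; [lra | apply continuity_scal_fun, continuity_cauchy_kernel].
Qed.

Lemma derivable_pt_lim_is_RInt_R (F : R -> R -> R) (F1 : R -> R) (I : R -> R) I1 K x :
  (forall y, is_RInt_R (F y) (I y)) -> is_RInt_R F1 I1 -> 0 <= K ->
  (forall h mu, Rabs h <= 1 ->
     Rabs (F (x + h) mu - F x mu - h * F1 mu) <= K * h ^ 2 * cauchy_kernel x mu) ->
  derivable_pt_lim I x I1.
Proof.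
  intros HF HF1 HK Hrem.
  apply (derivable_pt_lim_quadratic_remainder I x I1 (K * PI)); [pose proof PI_RGT_0; nra |].
  intros h Hh.
  assert (HI : is_RInt_R (fun mu => F (x + h) mu + -1 * F x mu + - h * F1 mu)
                         (I (x + h) + -1 * I x + - h * I1)).
  { repeat apply is_RInt_R_plus; try apply is_RInt_R_scal; auto. }
  assert (HKh : 0 <= K * h ^ 2) by (pose proof (pow2_ge_0 h); nra).
  apply Rabs_le; split.
  - enough (-1 * (I (x + h) + -1 * I x + - h * I1) <= K * h ^ 2 * PI) by lra.
    apply (is_RInt_R_le_dominated _ _ _ x (is_RInt_R_scal (-1) _ _ HI) HKh).
    intros mu; specialize (Hrem h mu Hh); apply Rabs_le_between in Hrem; lra.
  - enough (I (x + h) + -1 * I x + - h * I1 <= K * h ^ 2 * PI) by lra.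
    apply (is_RInt_R_le_dominated _ _ _ x HI HKh).
    intros mu; specialize (Hrem h mu Hh); apply Rabs_le_between in Hrem; lra.
Qed.

(** * The Gaussian density *)

Lemma sqrt_2PI_ge_1 : 1 <= sqrt (2 * PI).
Proof. rewrite <- sqrt_1; apply sqrt_le_1_alt; pose proof PI2_1; lra. Qed.

Lemma phi_pos t : 0 < phi t.
Proof. apply Rdiv_lt_0_compat; [apply exp_pos | pose proof sqrt_2PI_ge_1; lra]. Qed.

Lemma phi_le_exp t : phi t <= exp (- (t ^ 2) / 2).
Proof.
  unfold phi; pose proof sqrt_2PI_ge_1; pose proof (exp_pos (- (t ^ 2) / 2)).
  apply Rle_div_l; nra.
Qed.

Lemma phi_1_le t : t ^ 2 <= 1 -> phi 1 <= phi t.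
Proof.
  intros Ht; unfold phi, Rdiv; apply Rmult_le_compat_r.
  - left; apply Rinv_0_lt_compat; pose proof sqrt_2PI_ge_1; lra.
  - apply exp_le_exp_compat; simpl; lra.
Qed.

Lemma phi_opp_sub x mu : phi (x - mu) = phi (mu - x).
Proof. unfold phi; do 4 f_equal; ring. Qed.

Lemma derivable_pt_lim_phi t : derivable_pt_lim phi t (- t * phi t).
Proof.
  apply is_derive_Reals; unfold phi; auto_derive; [auto |].
  replace (- (t * (t * 1)) * / 2) with (- t ^ 2 / 2) by field.
  field; pose proof sqrt_2PI_ge_1; lra.
Qed.

Lemma derivable_pt_lim_mul_phi P dP t : derivable_pt_lim P t dP ->
  derivable_pt_lim (fun s => P s * phi s) t ((dP - t * P t) * phi t).
Proof.
  intros HP; replace ((dP - t * P t) * phi t) with (dP * phi t + P t * (- t * phi t)) by ring.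
  apply (derivable_pt_lim_mult P phi); auto using derivable_pt_lim_phi.
Qed.

Lemma derivable_pt_lim_opp_mul_phi t :
  derivable_pt_lim (fun s => - s * phi s) t ((t ^ 2 - 1) * phi t).
Proof.
  replace ((t ^ 2 - 1) * phi t) with ((-1 - t * - t) * phi t) by ring.
  apply (derivable_pt_lim_mul_phi (fun s => - s)).
  apply is_derive_Reals; auto_derive; [auto | ring].
Qed.

Definition gauss_moment (k : nat) (t : R) : R := t ^ k * phi t.

Lemma derivable_pt_lim_gauss_moment k t :
  derivable_pt_lim (gauss_moment k) t ((INR k * t ^ pred k - t ^ S k) * phi t).
Proof.
  replace (t ^ S k) with (t * t ^ k) by reflexivity.
  apply (derivable_pt_lim_mul_phi (fun s => s ^ k)), derivable_pt_lim_pow.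
Qed.

Lemma continuity_gauss_moment k : continuity (gauss_moment k).
Proof. intros t; apply derivable_continuous_pt; eexists; apply derivable_pt_lim_gauss_moment. Qed.

Lemma exp_quarter_poly_le t : (1 + t ^ 2) ^ 4 * exp (- (t ^ 2) / 4) <= 16 ^ 4.
Proof.
  pose proof (pow2_ge_0 t).
  assert (Hexp : ((1 + t ^ 2) / 16) ^ 4 <= exp (t ^ 2 / 4)).
  { replace (t ^ 2 / 4) with (t ^ 2 / 16 + t ^ 2 / 16 + t ^ 2 / 16 + t ^ 2 / 16) by field.
    rewrite !exp_plus; replace (exp (t ^ 2 / 16) * exp (t ^ 2 / 16) * exp (t ^ 2 / 16) * exp (t ^ 2 / 16))
      with (exp (t ^ 2 / 16) ^ 4) by ring.
    apply pow_incr; split; [lra |].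
    pose proof (exp_ineq1_le (t ^ 2 / 16)); lra. }
  pose proof (exp_opp_mul_exp (t ^ 2 / 4)); pose proof (exp_pos (- (t ^ 2 / 4))).
  replace (- (t ^ 2) / 4) with (- (t ^ 2 / 4)) by field.
  replace ((1 + t ^ 2) ^ 4) with (16 ^ 4 * ((1 + t ^ 2) / 16) ^ 4) by field.
  nra.
Qed.

Lemma phi_mul_exp_le Lam t :
  phi t * exp (Lam * Rabs t) <= exp (Lam ^ 2) * exp (- (t ^ 2) / 4).
Proof.
  eapply Rle_trans; [apply Rmult_le_compat_r; [left; apply exp_pos | apply phi_le_exp] |].
  rewrite <- !exp_plus; apply exp_le_exp_compat.
  rewrite <- (pow2_abs t); pose proof (pow2_ge_0 (Rabs t / 2 - Lam)); nra.
Qed.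

(* The Gaussian factor absorbs the weight [exp (Lam |t|)] coming from the
   log-Lipschitz prior; this is what makes every integral below converge. *)
Lemma Rabs_mul_phi_exp_le P c Lam t : 0 <= c -> Rabs P <= c * (1 + t ^ 2) ^ 3 ->
  Rabs (P * phi t) * exp (Lam * Rabs t) <= c * exp (Lam ^ 2) * 16 ^ 4 / (1 + t ^ 2).
Proof.
  intros Hc HP.
  pose proof (pow2_ge_0 t); pose proof (phi_pos t); pose proof (exp_pos (Lam * Rabs t)).
  pose proof (exp_pos (Lam ^ 2)); pose proof (exp_pos (- (t ^ 2) / 4)).
  pose proof (phi_mul_exp_le Lam t); pose proof (exp_quarter_poly_le t).
  rewrite Rabs_mult, (Rabs_pos_eq (phi t)) by lra.
  apply (Rle_div_r (Rabs P * phi t * exp (Lam * Rabs t))); [lra |].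
  assert (Hpow : 0 <= (1 + t ^ 2) ^ 3) by (apply pow_le; lra).
  assert (Hfac : Rabs P * (phi t * exp (Lam * Rabs t))
                 <= c * (1 + t ^ 2) ^ 3 * (exp (Lam ^ 2) * exp (- (t ^ 2) / 4))).
  { apply Rmult_le_compat; auto using Rabs_pos; nra. }
  apply Rle_trans with (c * exp (Lam ^ 2) * ((1 + t ^ 2) ^ 4 * exp (- (t ^ 2) / 4))).
  - replace ((1 + t ^ 2) ^ 4) with ((1 + t ^ 2) ^ 3 * (1 + t ^ 2)) by ring.
    replace (Rabs P * phi t * exp (Lam * Rabs t) * (1 + t ^ 2))
      with (Rabs P * (phi t * exp (Lam * Rabs t)) * (1 + t ^ 2)) by ring.
    apply Rmult_le_compat_r with (r := 1 + t ^ 2) in Hfac; [| lra].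
    eapply Rle_trans; [exact Hfac | right; ring].
  - apply Rmult_le_compat_l; nra.
Qed.

Lemma Rabs_pow_le_cube k t : (k <= 3)%nat -> Rabs (t ^ k) <= (1 + t ^ 2) ^ 3.
Proof.
  intros Hk; rewrite <- RPow_abs.
  assert (Habs : Rabs t <= 1 + t ^ 2).
  { rewrite <- (pow2_abs t); pose proof (pow2_ge_0 (Rabs t - 1)); nra. }
  apply Rle_trans with ((1 + t ^ 2) ^ k).
  - apply pow_incr; split; [apply Rabs_pos | exact Habs].
  - apply Rle_pow; [pose proof (pow2_ge_0 t); lra | exact Hk].
Qed.

Lemma inv_1_sq_shift_le s t : Rabs (s - t) <= 1 -> / (1 + s ^ 2) <= 3 / (1 + t ^ 2).
Proof.
  intros Hst; pose proof (pow2_ge_0 s); pose proof (pow2_ge_0 t).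
  assert (Ht : t ^ 2 <= 2 * s ^ 2 + 2).
  { assert ((s - t) ^ 2 <= 1) by (rewrite <- pow2_abs; pose proof (Rabs_pos (s - t)); nra).
    pose proof (pow2_ge_0 (s + (s - t))); nra. }
  apply Rle_div_r; [lra |]; rewrite Rmult_comm.
  apply Rle_div_l; lra.
Qed.

Lemma Rabs_mul_phi_exp_near_le P c Lam xi t : 0 <= c -> Rabs P <= c * (1 + xi ^ 2) ^ 3 ->
  Rabs (xi - t) <= 1 ->
  Rabs (P * phi xi) * exp (Lam * Rabs xi) <= c * exp (Lam ^ 2) * 16 ^ 4 * (3 / (1 + t ^ 2)).
Proof.
  intros Hc HP Hxi.
  eapply Rle_trans; [exact (Rabs_mul_phi_exp_le P c Lam xi Hc HP) |].
  unfold Rdiv; apply Rmult_le_compat_l.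
  - pose proof (exp_pos (Lam ^ 2)); nra.
  - apply inv_1_sq_shift_le, Hxi.
Qed.

Lemma sq_mul_exp_quarter_le x : x ^ 2 * exp (- (x ^ 2) / 4) <= 4.
Proof.
  pose proof (exp_ineq1_le (x ^ 2 / 4)); pose proof (exp_pos (- (x ^ 2 / 4))).
  pose proof (exp_opp_mul_exp (x ^ 2 / 4)).
  replace (- (x ^ 2) / 4) with (- (x ^ 2 / 4)) by field.
  assert (x ^ 2 <= 4 * exp (x ^ 2 / 4)) by lra.
  nra.
Qed.

Lemma gauss_weight_sq_ratio_le A B G a Lam x :
  0 <= A -> A <= exp (- (x ^ 2) / 2) -> 0 < G -> 0 <= a ->
  G * exp (- (a + Lam * Rabs x)) <= B ->
  A * x ^ 2 / (A + B) <= 4 / G + 16 * Lam ^ 2 + 8 * a.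
Proof.
  intros HA HAx HG Ha HB.
  set (Z := a + Lam * Rabs x) in *.
  pose proof (exp_pos (- Z)); pose proof (pow2_ge_0 x).
  assert (HGZ : 0 < G * exp (- Z)) by (apply Rmult_lt_0_compat; lra).
  assert (HG4 : 0 <= 4 / G) by (apply Rlt_le, Rdiv_lt_0_compat; lra).
  destruct (Rle_lt_dec Z (x ^ 2 / 4)) as [Htail | Hcore].
  - assert (Hratio : A * x ^ 2 / (A + B) <= exp (- (x ^ 2) / 2) * x ^ 2 / (G * exp (- Z))).
    { unfold Rdiv; apply Rmult_le_compat; [nra | left; apply Rinv_0_lt_compat; lra | nra |].
      apply Rinv_le_contravar; lra. }
    assert (Hsimpl : exp (- (x ^ 2) / 2) * x ^ 2 / (G * exp (- Z))
                     = x ^ 2 * exp (- (x ^ 2) / 2 + Z) / G).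
    { rewrite exp_plus, <- (Ropp_involutive Z), (exp_Ropp (- Z)), Ropp_involutive.
      field; lra. }
    assert (Hdecay : x ^ 2 * exp (- (x ^ 2) / 2 + Z) <= 4).
    { eapply Rle_trans; [| apply sq_mul_exp_quarter_le].
      apply Rmult_le_compat_l; [lra | apply exp_le_exp_compat; lra]. }
    assert (x ^ 2 * exp (- (x ^ 2) / 2 + Z) / G <= 4 / G)
      by (apply Rmult_le_compat_r; [left; apply Rinv_0_lt_compat |]; lra).
    assert (0 <= 16 * Lam ^ 2) by (pose proof (pow2_ge_0 Lam); lra).
    lra.
  - assert (Hle : A * x ^ 2 / (A + B) <= x ^ 2)
      by (apply Rle_div_l; [lra | nra]).
    assert (x ^ 2 <= 16 * Lam ^ 2 + 8 * a).
    { unfold Z in Hcore; rewrite <- (pow2_abs x) in *.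
      pose proof (pow2_ge_0 (Rabs x - 4 * Lam)); nra. }
    lra.
Qed.

(* Writing [p = A / m], [q = w J0 / m], [M1 = J1 / J0], [M2 = J2 / J0] for
   [m = A + w J0], the middle term equals [p q (x + M1)^2 + q (M2 - M1^2)]:
   the variance of a two-component mixture. *)
Lemma mixture_variance_bounds A w J0 J1 J2 x K :
  0 <= A -> 0 < w -> 0 < J0 -> J1 ^ 2 <= J0 * J2 -> J2 <= K * J0 ->
  0 <= ((A + w * J0) * (A * x ^ 2 + w * J2) - (w * J1 - A * x) ^ 2) / (A + w * J0) ^ 2
    <= 2 * (A * x ^ 2 / (A + w * J0)) + 3 * K.
Proof.
  intros HA Hw HJ0 HCS HJ2.
  set (m := A + w * J0).
  assert (HwJ : 0 < w * J0) by (apply Rmult_lt_0_compat; lra).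
  assert (Hm : 0 < m) by (unfold m; lra).
  set (p := A / m); set (q := w * J0 / m); set (M1 := J1 / J0); set (M2 := J2 / J0).
  assert (Hp : 0 <= p) by (apply Rle_mult_inv_pos; lra).
  assert (Hq : 0 <= q) by (apply Rle_mult_inv_pos; lra).
  assert (Hpq : p + q = 1) by (unfold p, q, m; field; lra).
  assert (HM : M1 ^ 2 <= M2).
  { unfold M1, M2; replace ((J1 / J0) ^ 2) with (J1 ^ 2 / J0 / J0) by (field; lra).
    apply Rmult_le_compat_r; [left; apply Rinv_0_lt_compat; lra |].
    apply Rle_div_l; lra. }
  assert (HM2 : M2 <= K) by (apply Rle_div_l; lra).
  replace ((m * (A * x ^ 2 + w * J2) - (w * J1 - A * x) ^ 2) / m ^ 2)
    with (p * q * (x + M1) ^ 2 + q * (M2 - M1 ^ 2)) by (unfold p, q, M1, M2, m; field; lra).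
  replace (A * x ^ 2 / m) with (p * x ^ 2) by (unfold p; field; lra).
  pose proof (pow2_ge_0 (x + M1)); pose proof (pow2_ge_0 (x - M1)).
  pose proof (pow2_ge_0 M1); pose proof (pow2_ge_0 x).
  split; [apply Rplus_le_le_0_compat; apply Rmult_le_pos; nra |].
  assert (p * q <= p) by nra; assert (p * q <= 1) by nra.
  assert (p * q * (x + M1) ^ 2 <= p * q * (2 * x ^ 2 + 2 * M1 ^ 2)) by (apply Rmult_le_compat_l; nra).
  assert (q * (M2 - M1 ^ 2) <= M2) by nra.
  nra.
Qed.

(** * Gaussian smoothing of a log-Lipschitz density *)

Definition log_lipschitz (g : R -> R) (Lam : R) : Prop :=
  forall u v, g u <= g v * exp (Lam * Rabs (u - v)).

Section GaussianSmoothing.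

Variables (g : R -> R) (Lam : R).
Hypotheses (g_cont : continuity g) (g_pos : forall u, 0 < g u)
  (g_log_lipschitz : log_lipschitz g Lam) (Lam_ge0 : 0 <= Lam).

Definition moment_integrand (k : nat) (c x mu : R) : R := gauss_moment k (mu - x) * g (mu - c).

Definition moment (k : nat) (c x : R) : R := Integral (moment_integrand k c x).

Lemma g_shift_le c x mu : g (mu - c) <= g (x - c) * exp (Lam * Rabs (mu - x)).
Proof. replace (mu - x) with ((mu - c) - (x - c)) by ring; apply g_log_lipschitz. Qed.

Lemma g_shift_ge c x mu : g (x - c) * exp (- (Lam * Rabs (mu - x))) <= g (mu - c).
Proof.
  pose proof (g_log_lipschitz (x - c) (mu - c)) as Hlip.
  replace (x - c - (mu - c)) with (- (mu - x)) in Hlip by ring; rewrite Rabs_Ropp in Hlip.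
  pose proof (exp_pos (- (Lam * Rabs (mu - x)))) as Hpos.
  apply Rmult_le_compat_r with (r := exp (- (Lam * Rabs (mu - x)))) in Hlip; [| lra].
  rewrite Rmult_assoc, (Rmult_comm (exp _)), exp_opp_mul_exp, Rmult_1_r in Hlip; exact Hlip.
Qed.

Lemma Rabs_poly_phi_g_le P Kp c x mu : 0 <= Kp -> Rabs P <= Kp * (1 + (mu - x) ^ 2) ^ 3 ->
  Rabs (P * phi (mu - x) * g (mu - c))
    <= g (x - c) * Kp * exp (Lam ^ 2) * 16 ^ 4 * cauchy_kernel x mu.
Proof.
  intros HKp HP.
  pose proof (Rabs_mul_phi_exp_le P Kp Lam (mu - x) HKp HP) as Hdecay.
  pose proof (g_shift_le c x mu); pose proof (g_pos (mu - c)); pose proof (g_pos (x - c)).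
  rewrite Rabs_mult, (Rabs_pos_eq (g (mu - c))) by lra.
  apply Rle_trans with (Rabs (P * phi (mu - x)) * (g (x - c) * exp (Lam * Rabs (mu - x)))).
  - apply Rmult_le_compat_l; [apply Rabs_pos | lra].
  - unfold cauchy_kernel; unfold Rdiv in Hdecay.
    replace (g (x - c) * Kp * exp (Lam ^ 2) * 16 ^ 4 * / (1 + (mu - x) ^ 2))
      with (g (x - c) * (Kp * exp (Lam ^ 2) * 16 ^ 4 * / (1 + (mu - x) ^ 2))) by ring.
    replace (Rabs (P * phi (mu - x)) * (g (x - c) * exp (Lam * Rabs (mu - x))))
      with (g (x - c) * (Rabs (P * phi (mu - x)) * exp (Lam * Rabs (mu - x)))) by ring.
    apply Rmult_le_compat_l; lra.
Qed.

Lemma is_RInt_R_moment k c x : (k <= 3)%nat -> is_RInt_R (moment_integrand k c x) (moment k c x).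
Proof.
  intros Hk.
  assert (Hcont : continuity (moment_integrand k c x)).
  { apply continuity_mult_fun; apply continuity_shift; auto using continuity_gauss_moment. }
  destruct (is_RInt_R_dominated (moment_integrand k c x)
              (g (x - c) * 1 * exp (Lam ^ 2) * 16 ^ 4) x) as [l Hl]; auto.
  - pose proof (g_pos (x - c)); pose proof (exp_pos (Lam ^ 2)); nra.
  - intros mu; apply Rabs_poly_phi_g_le; [lra |].
    rewrite Rmult_1_l; apply Rabs_pow_le_cube, Hk.
  - unfold moment; rewrite (Integral_is_RInt_R _ l); auto.
Qed.

Lemma g_shift_le_near c x mu xi : Rabs (xi - (mu - x)) <= 1 ->
  g (mu - c) <= g (x - c) * exp Lam * exp (Lam * Rabs xi).
Proof.
  intros Hxi; pose proof (g_pos (x - c)).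
  eapply Rle_trans; [apply g_shift_le |].
  rewrite Rmult_assoc, <- exp_plus; apply Rmult_le_compat_l; [lra |].
  apply exp_le_exp_compat.
  assert (Rabs (mu - x) <= 1 + Rabs xi).
  { replace (mu - x) with (- (xi - (mu - x)) + xi) by ring.
    eapply Rle_trans; [apply Rabs_triang |]; rewrite Rabs_Ropp; lra. }
  nra.
Qed.

Lemma moment_integrand_remainder_le k c x h mu dps Q Kq :
  0 <= Kq ->
  (forall s, derivable_pt_lim (gauss_moment k) s (dps s)) ->
  (forall s, derivable_pt_lim dps s (Q s * phi s)) ->
  (forall s, Rabs (Q s) <= Kq * (1 + s ^ 2) ^ 3) ->
  Rabs h <= 1 ->
  Rabs (moment_integrand k c (x + h) mu - moment_integrand k c x mu
        - h * (- dps (mu - x) * g (mu - c)))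
    <= 3 * exp Lam * Kq * exp (Lam ^ 2) * 16 ^ 4 * g (x - c) * h ^ 2 * cauchy_kernel x mu.
Proof.
  intros HKq Hdps HQ HQbound Hh.
  set (t := mu - x).
  destruct (taylor_lagrange_2 (gauss_moment k) dps (fun s => Q s * phi s) t h Hdps HQ)
    as [xi [Hxi Hrem]].
  unfold moment_integrand; replace (mu - (x + h)) with (t - h) by (unfold t; ring); fold t.
  replace (gauss_moment k (t - h) * g (mu - c) - gauss_moment k t * g (mu - c)
           - h * (- dps t * g (mu - c)))
    with (g (mu - c) * (gauss_moment k (t - h) - gauss_moment k t + h * dps t)) by ring.
  pose proof (g_pos (mu - c)); pose proof (g_pos (x - c)).
  rewrite Rabs_mult, (Rabs_pos_eq (g (mu - c))) by lra.
  assert (Hxi1 : Rabs (xi - t) <= 1) by lra.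
  pose proof (g_shift_le_near c x mu xi Hxi1) as Hweight.
  pose proof (Rabs_mul_phi_exp_near_le (Q xi) Kq Lam xi t HKq (HQbound xi) Hxi1) as Hdecay.
  unfold cauchy_kernel; fold t.
  pose proof (pow2_ge_0 h); pose proof (exp_pos Lam); pose proof (exp_pos (Lam * Rabs xi)).
  pose proof (Rabs_pos (Q xi * phi xi)).
  apply Rle_trans with (g (mu - c) * (Rabs (Q xi * phi xi) * h ^ 2)).
  { apply Rmult_le_compat_l; lra. }
  apply Rle_trans with (g (x - c) * exp Lam * (Rabs (Q xi * phi xi) * exp (Lam * Rabs xi)) * h ^ 2).
  { replace (g (x - c) * exp Lam * (Rabs (Q xi * phi xi) * exp (Lam * Rabs xi)) * h ^ 2)
      with ((g (x - c) * exp Lam * exp (Lam * Rabs xi)) * (Rabs (Q xi * phi xi) * h ^ 2)) by ring.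
    apply Rmult_le_compat_r; nra. }
  replace (3 * exp Lam * Kq * exp (Lam ^ 2) * 16 ^ 4 * g (x - c) * h ^ 2 * / (1 + t ^ 2))
    with (g (x - c) * exp Lam * (Kq * exp (Lam ^ 2) * 16 ^ 4 * (3 / (1 + t ^ 2))) * h ^ 2)
    by (unfold Rdiv; ring).
  apply Rmult_le_compat_r; [lra |]; apply Rmult_le_compat_l; nra.
Qed.

Lemma derivable_pt_lim_moment k c x dps Q Kq F1 I1 :
  (k <= 3)%nat -> 0 <= Kq ->
  (forall s, derivable_pt_lim (gauss_moment k) s (dps s)) ->
  (forall s, derivable_pt_lim dps s (Q s * phi s)) ->
  (forall s, Rabs (Q s) <= Kq * (1 + s ^ 2) ^ 3) ->
  is_RInt_R F1 I1 -> (forall mu, F1 mu = - dps (mu - x) * g (mu - c)) ->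
  derivable_pt_lim (moment k c) x I1.
Proof.
  intros Hk HKq Hdps HQ HQbound HF1 EF1.
  apply (derivable_pt_lim_is_RInt_R (moment_integrand k c) F1 (moment k c) I1
           (3 * exp Lam * Kq * exp (Lam ^ 2) * 16 ^ 4 * g (x - c))); auto.
  - intros y; apply is_RInt_R_moment, Hk.
  - pose proof (exp_pos Lam); pose proof (exp_pos (Lam ^ 2)); pose proof (g_pos (x - c)).
    apply Rmult_le_pos; [| lra]; apply Rmult_le_pos; [| lra].
    apply Rmult_le_pos; [| lra]; nra.
  - intros h mu Hh; rewrite EF1; eapply moment_integrand_remainder_le; eauto.
Qed.

Lemma derivable_pt_lim_moment0 c x : derivable_pt_lim (moment 0 c) x (moment 1 c x).
Proof.
  apply (derivable_pt_lim_moment 0 c x (fun s => - s * phi s) (fun s => s ^ 2 - 1) 2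
           (moment_integrand 1 c x)); auto.
  - lra.
  - intros s; replace (- s * phi s) with ((INR 0 * s ^ pred 0 - s ^ 1) * phi s) by (simpl; ring).
    apply derivable_pt_lim_gauss_moment.
  - apply derivable_pt_lim_opp_mul_phi.
  - intros s; unfold Rminus; eapply Rle_trans; [apply Rabs_triang |].
    rewrite Rabs_Ropp, Rabs_R1.
    pose proof (Rabs_pow_le_cube 2 s ltac:(lia)); pose proof (Rabs_pow_le_cube 0 s ltac:(lia)) as H1.
    rewrite pow_O, Rabs_R1 in H1; lra.
  - apply is_RInt_R_moment; lia.
  - intros mu; unfold moment_integrand, gauss_moment; ring.
Qed.

Lemma derivable_pt_lim_moment1 c x :
  derivable_pt_lim (moment 1 c) x (moment 2 c x - moment 0 c x).
Proof.
  apply (derivable_pt_lim_moment 1 c x (fun s => (1 - s ^ 2) * phi s) (fun s => s ^ 3 - 3 * s) 4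
           (fun mu => moment_integrand 2 c x mu + -1 * moment_integrand 0 c x mu)); auto.
  - lra.
  - intros s; replace ((1 - s ^ 2) * phi s) with ((INR 1 * s ^ pred 1 - s ^ 2) * phi s) by (simpl; ring).
    apply derivable_pt_lim_gauss_moment.
  - intros s; replace ((s ^ 3 - 3 * s) * phi s) with ((- 2 * s - s * (1 - s ^ 2)) * phi s) by ring.
    apply (derivable_pt_lim_mul_phi (fun s => 1 - s ^ 2)).
    apply is_derive_Reals; auto_derive; [auto | ring].
  - intros s; unfold Rminus; eapply Rle_trans; [apply Rabs_triang |].
    rewrite Rabs_Ropp, Rabs_mult, (Rabs_pos_eq 3) by lra.
    pose proof (Rabs_pow_le_cube 3 s ltac:(lia)); pose proof (Rabs_pow_le_cube 1 s ltac:(lia)) as Hs.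
    rewrite pow_1 in Hs; lra.
  - replace (moment 2 c x - moment 0 c x) with (moment 2 c x + -1 * moment 0 c x) by ring.
    apply is_RInt_R_plus; [| apply is_RInt_R_scal]; apply is_RInt_R_moment; lia.
  - intros mu; unfold moment_integrand, gauss_moment; simpl; ring.
Qed.

Definition moment0_coef : R := 2 * phi 1 * exp (- Lam).

Definition moment2_coef : R := exp (Lam ^ 2) * 16 ^ 4 * PI.

Lemma moment0_coef_pos : 0 < moment0_coef.
Proof. pose proof (phi_pos 1); pose proof (exp_pos (- Lam)); unfold moment0_coef; nra. Qed.

Lemma moment0_ge c x : g (x - c) * moment0_coef <= moment 0 c x.
Proof.
  unfold moment0_coef.
  pose proof (is_RInt_R_moment 0 c x ltac:(lia)) as Hmom; pose proof Hmom as [Hcont _].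
  pose proof (phi_pos 1); pose proof (exp_pos (- Lam)); pose proof (g_pos (x - c)).
  eapply Rle_trans; [| apply (is_RInt_R_RInt_le _ _ (x - 1) (x + 1) Hmom); [| lra]].
  - replace (g (x - c) * (2 * phi 1 * exp (- Lam)))
      with (RInt (fun _ => g (x - c) * phi 1 * exp (- Lam)) (x - 1) (x + 1))
      by (rewrite RInt_const; unfold scal; simpl; unfold mult; simpl; ring).
    apply RInt_le; [lra | apply ex_RInt_const | apply ex_RInt_continuity, Hcont |].
    intros mu Hmu; unfold moment_integrand, gauss_moment; rewrite pow_O, Rmult_1_l.
    assert (Hphi : phi 1 <= phi (mu - x)) by (apply phi_1_le; nra).
    assert (Hg : g (x - c) * exp (- Lam) <= g (mu - c)).
    { eapply Rle_trans; [| apply g_shift_ge]; apply Rmult_le_compat_l; [lra |].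
      apply exp_le_exp_compat; assert (Rabs (mu - x) <= 1) by (apply Rabs_le; lra); nra. }
    replace (g (x - c) * phi 1 * exp (- Lam)) with (phi 1 * (g (x - c) * exp (- Lam))) by ring.
    apply Rmult_le_compat; nra.
  - intros mu; unfold moment_integrand, gauss_moment.
    pose proof (phi_pos (mu - x)); pose proof (g_pos (mu - c)); simpl; nra.
Qed.

Lemma moment0_pos c x : 0 < moment 0 c x.
Proof.
  eapply Rlt_le_trans; [| apply moment0_ge].
  apply Rmult_lt_0_compat; [apply g_pos | apply moment0_coef_pos].
Qed.

Lemma moment2_le c x : moment 2 c x <= g (x - c) * moment2_coef.
Proof.
  unfold moment2_coef.
  replace (g (x - c) * (exp (Lam ^ 2) * 16 ^ 4 * PI))
    with (g (x - c) * 1 * exp (Lam ^ 2) * 16 ^ 4 * PI) by ring.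
  apply (is_RInt_R_le_dominated _ _ _ x (is_RInt_R_moment 2 c x ltac:(lia))).
  - pose proof (g_pos (x - c)); pose proof (exp_pos (Lam ^ 2)); nra.
  - intros mu; unfold moment_integrand, gauss_moment.
    eapply Rle_trans; [apply Rle_abs | apply Rabs_poly_phi_g_le; [lra |]].
    rewrite Rmult_1_l; apply Rabs_pow_le_cube; lia.
Qed.

Lemma moment_cauchy_schwarz c x : moment 1 c x ^ 2 <= moment 0 c x * moment 2 c x.
Proof.
  pose proof (moment0_pos c x) as HJ0.
  set (J0 := moment 0 c x) in *; set (J1 := moment 1 c x); set (J2 := moment 2 c x).
  set (s := J1 / J0).
  assert (HI : is_RInt_R (fun mu => moment_integrand 2 c x mu
                 + (-2 * s * moment_integrand 1 c x mu + s ^ 2 * moment_integrand 0 c x mu))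
                 (J2 + (-2 * s * J1 + s ^ 2 * J0))).
  { repeat apply is_RInt_R_plus; try apply is_RInt_R_scal; apply is_RInt_R_moment; lia. }
  assert (Hvar : 0 <= J2 + (-2 * s * J1 + s ^ 2 * J0)).
  { apply (is_RInt_R_ge _ _ _ HI); exists 0; intros a b Ha Hb.
    apply RInt_ge_0_cont; [apply HI | lra |]; intros mu.
    unfold moment_integrand, gauss_moment.
    pose proof (g_pos (mu - c)); pose proof (phi_pos (mu - x)).
    replace ((mu - x) ^ 2 * phi (mu - x) * g (mu - c)
             + (-2 * s * ((mu - x) ^ 1 * phi (mu - x) * g (mu - c))
                + s ^ 2 * ((mu - x) ^ 0 * phi (mu - x) * g (mu - c))))
      with ((mu - x - s) ^ 2 * (phi (mu - x) * g (mu - c))) by (simpl; ring).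
    apply Rmult_le_pos; [apply pow2_ge_0 | nra]. }
  unfold s in Hvar.
  replace (J2 + (-2 * (J1 / J0) * J1 + (J1 / J0) ^ 2 * J0)) with ((J0 * J2 - J1 ^ 2) / J0) in Hvar
    by (field; lra).
  apply Rle_div_r in Hvar; lra.
Qed.

(* [1 + (log m)''] expressed through the moments: the posterior variance of [mu - x]. *)
Definition dzeta (w c x : R) : R :=
  let A := (1 - w) * phi x in
  ((A + w * moment 0 c x) * (A * x ^ 2 + w * moment 2 c x) - (w * moment 1 c x - A * x) ^ 2)
    / (A + w * moment 0 c x) ^ 2.

Lemma marg_moment w c : marg g w c = fun y => (1 - w) * phi y + w * moment 0 c y.
Proof.
  apply functional_extensionality; intros y.
  unfold marg, gconv, moment, moment_integrand, gauss_moment; do 3 f_equal.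
  apply functional_extensionality; intros mu; rewrite phi_opp_sub; ring.
Qed.

Lemma derivable_pt_lim_zeta w c x : 0 < w -> w <= 1 ->
  derivable_pt_lim (zeta g w c) x (dzeta w c x).
Proof.
  intros Hw0 Hw1.
  set (m := fun y => (1 - w) * phi y + w * moment 0 c y).
  set (dm := fun y => (1 - w) * (- y * phi y) + w * moment 1 c y).
  set (ddm := fun y => (1 - w) * ((y ^ 2 - 1) * phi y) + w * (moment 2 c y - moment 0 c y)).
  assert (Hm_pos : forall y, 0 < m y).
  { intros y; pose proof (phi_pos y); pose proof (Rmult_lt_0_compat _ _ Hw0 (moment0_pos c y)).
    unfold m; nra. }
  assert (Hdm : forall y, derivable_pt_lim m y (dm y)).
  { intros y; apply (derivable_pt_lim_plus (fun y => (1 - w) * phi y) (fun y => w * moment 0 c y));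
      apply derivable_pt_lim_scal; [apply derivable_pt_lim_phi | apply derivable_pt_lim_moment0]. }
  assert (Hddm : forall y, derivable_pt_lim dm y (ddm y)).
  { intros y; apply (derivable_pt_lim_plus (fun y => (1 - w) * (- y * phi y)) (fun y => w * moment 1 c y));
      apply derivable_pt_lim_scal;
      [apply derivable_pt_lim_opp_mul_phi | apply derivable_pt_lim_moment1]. }
  assert (Hzeta : zeta g w c = fun y => y + dm y / m y).
  { apply functional_extensionality; intros y; unfold zeta; f_equal.
    apply deriv_derivable_pt_lim; rewrite marg_moment; fold m.
    replace (dm y / m y) with (/ m y * dm y) by (field; specialize (Hm_pos y); lra).
    apply (derivable_pt_lim_comp m ln); [apply Hdm | apply derivable_pt_lim_ln, Hm_pos]. }
  rewrite Hzeta; specialize (Hm_pos x).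
  replace (dzeta w c x) with (1 + (ddm x * m x - dm x * dm x) / (m x) ^ 2).
  - apply (derivable_pt_lim_plus (fun y => y) (fun y => dm y / m y)); [apply derivable_pt_lim_id |].
    rewrite <- Rsqr_pow2; apply derivable_pt_lim_div; auto; lra.
  - unfold dzeta, m, dm, ddm in *; cbv zeta; field; lra.
Qed.

Lemma moment_coef_ratio_ge_0 : 0 <= moment2_coef / moment0_coef.
Proof.
  unfold moment2_coef; pose proof moment0_coef_pos; pose proof (exp_pos (Lam ^ 2)); pose proof PI_RGT_0.
  apply Rle_mult_inv_pos; [nra | lra].
Qed.

Lemma moment2_le_moment0 c x : moment 2 c x <= moment2_coef / moment0_coef * moment 0 c x.
Proof.
  pose proof moment0_coef_pos; pose proof (g_pos (x - c)); pose proof moment_coef_ratio_ge_0.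
  eapply Rle_trans; [apply moment2_le |].
  replace (g (x - c) * moment2_coef) with (moment2_coef / moment0_coef * (g (x - c) * moment0_coef))
    by (field; lra).
  apply Rmult_le_compat_l, moment0_ge; auto.
Qed.

(* [w] is written as [exp (- ln (1/w))], so that the prior weight enters the
   exponent on the same footing as the shift [Lam |x - c|]. *)
Lemma weighted_moment0_ge w c x : 0 < w ->
  g 0 * moment0_coef * exp (- ((ln (1 / w) + Lam * Rabs c) + Lam * Rabs x)) <= w * moment 0 c x.
Proof.
  intros Hw.
  pose proof moment0_coef_pos; pose proof (g_pos 0); pose proof (g_pos (x - c)).
  assert (Hg : g 0 * exp (- (Lam * Rabs c + Lam * Rabs x)) <= g (x - c)).
  { pose proof (g_log_lipschitz 0 (x - c)) as Hlip; rewrite Rminus_0_l, Rabs_Ropp in Hlip.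
    set (E := Lam * Rabs c + Lam * Rabs x).
    assert (exp (Lam * Rabs (x - c)) <= exp E).
    { apply exp_le_exp_compat; pose proof (Rabs_triang x (- c)); rewrite Rabs_Ropp in *.
      unfold E, Rminus; nra. }
    apply Rle_trans with (g (x - c) * exp E * exp (- E)).
    - apply Rmult_le_compat_r; [left; apply exp_pos |].
      eapply Rle_trans; [exact Hlip |]; apply Rmult_le_compat_l; lra.
    - rewrite Rmult_assoc, (Rmult_comm (exp E)), exp_opp_mul_exp; lra. }
  replace (- ((ln (1 / w) + Lam * Rabs c) + Lam * Rabs x))
    with (- ln (1 / w) + - (Lam * Rabs c + Lam * Rabs x)) by ring.
  rewrite exp_plus, exp_opp_ln_inv by auto.
  pose proof (exp_pos (- (Lam * Rabs c + Lam * Rabs x))).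
  apply Rle_trans with (w * (g (x - c) * moment0_coef)); [| apply Rmult_le_compat_l, moment0_ge; lra].
  replace (g 0 * moment0_coef * (w * exp (- (Lam * Rabs c + Lam * Rabs x))))
    with (w * moment0_coef * (g 0 * exp (- (Lam * Rabs c + Lam * Rabs x)))) by ring.
  replace (w * (g (x - c) * moment0_coef)) with (w * moment0_coef * g (x - c)) by ring.
  apply Rmult_le_compat_l; nra.
Qed.

Definition dzeta_const : R :=
  8 / (g 0 * moment0_coef) + 32 * Lam ^ 2 + 3 * (moment2_coef / moment0_coef) + 16 * Lam + 16.

Lemma dzeta_const_pos : 0 < dzeta_const.
Proof.
  unfold dzeta_const; pose proof moment_coef_ratio_ge_0; pose proof (pow2_ge_0 Lam).
  assert (0 < 8 / (g 0 * moment0_coef)).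
  { apply Rdiv_lt_0_compat; [lra |]; apply Rmult_lt_0_compat; [apply g_pos | apply moment0_coef_pos]. }
  lra.
Qed.

Lemma dzeta_le w c x : 0 < w -> w <= 1 ->
  Rabs (dzeta w c x) <= dzeta_const * (1 + Rabs c + ln (1 / w)).
Proof.
  intros Hw0 Hw1.
  set (A := (1 - w) * phi x); set (L := ln (1 / w)).
  set (G := g 0 * moment0_coef); set (K := moment2_coef / moment0_coef).
  assert (HA : 0 <= A) by (unfold A; pose proof (phi_pos x); nra).
  assert (HL : 0 <= L) by (apply ln_inv_ge_0; auto).
  assert (HG : 0 < G) by (apply Rmult_lt_0_compat; [apply g_pos | apply moment0_coef_pos]).
  assert (HK : 0 <= K) by apply moment_coef_ratio_ge_0.
  destruct (mixture_variance_bounds A w (moment 0 c x) (moment 1 c x) (moment 2 c x) x K)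
    as [Hlo Hhi]; auto using moment0_pos, moment_cauchy_schwarz, moment2_le_moment0.
  assert (Hratio : A * x ^ 2 / (A + w * moment 0 c x) <= 4 / G + 16 * Lam ^ 2 + 8 * (L + Lam * Rabs c)).
  { apply gauss_weight_sq_ratio_le; auto.
    - unfold A; pose proof (phi_le_exp x); pose proof (phi_pos x); nra.
    - pose proof (Rabs_pos c); nra.
    - apply weighted_moment0_ge; auto. }
  unfold dzeta; cbv zeta; fold A.
  rewrite Rabs_pos_eq by exact Hlo; eapply Rle_trans; [exact Hhi |].
  fold L; unfold dzeta_const; fold G; fold K.
  pose proof (Rabs_pos c); pose proof (pow2_ge_0 Lam).
  assert (HG8 : 0 < 8 / G) by (apply Rdiv_lt_0_compat; lra).
  replace (4 / G) with (8 / G / 2) in Hratio by (field; lra).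
  assert (8 / G + 32 * Lam ^ 2 + 3 * K <= (8 / G + 32 * Lam ^ 2 + 3 * K) * (1 + Rabs c + L)) by nra.
  assert (16 * Lam * Rabs c <= 16 * Lam * (1 + Rabs c + L)) by nra.
  nra.
Qed.

Lemma zeta_derivative_bound : exists C, 0 < C /\
  forall x w c, 0 < w -> w <= 1 ->
    exists d, derivable_pt_lim (zeta g w c) x d /\ Rabs d <= C * (1 + Rabs c + ln (1 / w)).
Proof.
  exists dzeta_const; split; [apply dzeta_const_pos |].
  intros x w c Hw0 Hw1; exists (dzeta w c x).
  split; [apply derivable_pt_lim_zeta | apply dzeta_le]; auto.
Qed.

End GaussianSmoothing.

(** * The two families of priors *)

Section LogRegular.

Variables (g : R -> R) (Lam Lam' : R).
Hypothesis g_regular : log_regular g Lam Lam'.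

Lemma log_regular_continuity : continuity g.
Proof.
  destruct g_regular as [Hpos [l' [Hl' _]]]; intros u.
  assert (Hexp : derivable_pt_lim (fun v => exp (ln (g v))) u (exp (ln (g u)) * l' u)).
  { apply (derivable_pt_lim_comp (fun v => ln (g v)) exp); [apply Hl' | apply derivable_pt_lim_exp]. }
  replace g with (fun v => exp (ln (g v))) by (apply functional_extensionality; intros; apply exp_ln, Hpos).
  apply derivable_continuous_pt; eexists; exact Hexp.
Qed.

Lemma log_regular_log_lipschitz : log_lipschitz g Lam.
Proof.
  destruct g_regular as [Hpos [l' [Hl' [Hbound _]]]]; intros u v.
  destruct (MVT_abs (fun v => ln (g v)) l' v u Hl') as [xi [_ Exi]].
  rewrite <- (exp_ln (g u)), <- (exp_ln (g v)), <- exp_plus by apply Hpos.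
  apply exp_le_exp_compat.
  enough (ln (g u) - ln (g v) <= Lam * Rabs (u - v)) by lra.
  rewrite Exi; eapply Rle_trans; [apply Rle_abs |]; rewrite Rabs_mult.
  apply Rmult_le_compat_r; [apply Rabs_pos | apply Hbound].
Qed.

End LogRegular.

Lemma continuity_laplace Lam : continuity (laplace Lam).
Proof. intros u; unfold laplace; reg. Qed.

Lemma laplace_pos Lam u : 0 < Lam -> 0 < laplace Lam u.
Proof. intros HLam; unfold laplace; pose proof (exp_pos (- Lam * Rabs u)); nra. Qed.

Lemma laplace_log_lipschitz Lam : 0 <= Lam -> log_lipschitz (laplace Lam) Lam.
Proof.
  intros HLam u v; unfold laplace.
  rewrite Rmult_assoc, <- exp_plus.
  assert (Rabs v <= Rabs u + Rabs (u - v)).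
  { replace v with (u + - (u - v)) at 1 by ring.
    eapply Rle_trans; [apply Rabs_triang | rewrite Rabs_Ropp; lra]. }
  apply Rmult_le_compat_l; [lra |]; apply exp_le_exp_compat; nra.
Qed.

Theorem mainTheorem10 (gamma0 : R -> R) :
  ((is_density gamma0 /\ symmetric_unimodal gamma0 /\
    exists Lam Lam', 0 < Lam /\ 0 < Lam' /\ log_regular gamma0 Lam Lam')
   \/ (exists Lam, 0 < Lam /\ gamma0 = laplace Lam)) ->
  exists C, 0 < C /\
    forall x w c, 0 < w -> w <= 1 ->
      exists d, derivable_pt_lim (zeta gamma0 w c) x d /\
        Rabs d <= C * (1 + Rabs c + ln (1 / w)).
Proof.
  intros [[_ [_ [Lam [Lam' [HLam [_ Hreg]]]]]] | [Lam [HLam ->]]].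
  - apply (zeta_derivative_bound gamma0 Lam).
    + apply (log_regular_continuity _ _ _ Hreg).
    + apply Hreg.
    + apply (log_regular_log_lipschitz _ _ _ Hreg).
    + lra.
  - apply (zeta_derivative_bound (laplace Lam) Lam).
    + apply continuity_laplace.
    + intros u; apply laplace_pos, HLam.
    + apply laplace_log_lipschitz; lra.
    + lra.
Qed.
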